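(* Let $C=(C,\sup_C)$ be a $P$-algebra, $(E,e)$ a fibered $P$-algebra over $C$, and $(f,\bar f),(g,\bar g)$ two $P$-algebra sections of $(E,e)$. Then the canonical function $\mathsf{Id}\big((f,\bar f),(g,\bar g)\big)\to\mathsf{AlgSecHot}\big((f,\bar f),(g,\bar g)\big)$ (defined by path induction, sending $\mathsf{refl}$ to the constant homotopy together with the evident coherence) is an equivalence of types.
   Context: We work in the intensional Martin-Löf type theory $\mathcal H$ ($\Sigma$, $\Pi$, identity types, a universe $\mathsf U$ à la Russell closed under these, judgemental $\eta$ for $\Pi$, function extensionality; no identity reflection, K or UIP). For paths $p:\mathsf{Id}(a,b)$, $q:\mathsf{Id}(b,c)$, $q\cdot p:\mathsf{Id}(a,c)$ is their composite. For a path $p:\mathsf{Id}(f,g)$ between (dependent) functions, $\mathsf{ext}\,p:(\Pi x)\mathsf{Id}(fx,gx)$ is the associated homotopy; for a homotopy $\alpha$, $\int\alpha$ is the path given by function extensionality. $\mathsf{Hot}(f,g)=(\Pi x)\mathsf{Id}(fx,gx)$. Fix $A:\mathsf U$, $B:A\to\mathsf U$. For $C:\mathsf U$, $PC=(\Sigma x:A)(B(x)\to C)$. A $P$-algebra is $(C,\sup_C)$ with $C:\mathsf U$, $\sup_C:PC\to C$. A fibered $P$-algebra over $C$ is $(E,e)$ with $E:C\to\mathsf U$ and $e:(\Pi x:A)(\Pi u:B(x)\to C)((\Pi y:B(x))E(uy))\to E(\sup_C(x,u))$. For $f:(\Pi z:C)E(z)$ let $e_f=(\lambda x)(\lambda u)\,e(x,u,f\circ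 u)$ and $f\,\sup_C=(\lambda x)(\lambda u)\,f(\sup_C(x,u))$. A $P$-algebra section of $(E,e)$ is $(f,\bar f)$ with $f:(\Pi z:C)E(z)$ and $\bar f:\mathsf{Id}(f\,\sup_C,e_f)$; write $(\mathsf{ext}\,\bar f)_{x,u}:\mathsf{Id}(f(\sup_C(x,u)),e(x,u,f\circ u))$ for its components. For $\alpha:\mathsf{Hot}(f,g)$ and $u:B(x)\to C$ let $\int\alpha_u:\mathsf{Id}(f\circ u,g\circ u)$ be the path associated to the homotopy $(\lambda y)\alpha_{uy}$, and $e(x,u,\int\alpha_u):\mathsf{Id}(e(x,u,f\circ u),e(x,u,g\circ u))$ its image under $e(x,u,-)$. Then $\mathsf{AlgSecHot}((f,\bar f),(g,\bar g))=(\Sigma\alpha:\mathsf{Hot}(f,g))(\Pi x:A)(\Pi u:B(x)\to C)\,\mathsf{Id}\big(e(x,u,\int\alpha_u)\cdot(\mathsf{ext}\,\bar f)_{x,u},\ (\mathsf{ext}\,\bar g)_{x,u}\cdot\alpha_{\sup_C(x,u)}\big)$. *)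

(** Identity types of intensional MLTT (Type-valued, so not Rocq's Prop-valued [eq]). *)
Inductive paths {X : Type} (a : X) : X -> Type := idpath : paths a a.
Arguments idpath {X a}.

(** Composition, written diagrammatically: [concat p q] is the paper's [q · p]. *)
Definition concat {X : Type} {a b c : X} (p : paths a b) (q : paths b c) : paths a c :=
  match q in paths _ c' return paths a c' with idpath => p end.

Definition inv {X : Type} {a b : X} (p : paths a b) : paths b a :=
  match p in paths _ b' return paths b' a with idpath => idpath end.

Definition ap {X Y : Type} (h : X -> Y) {a b : X} (p : paths a b) : paths (h a) (h b) :=
  match p in paths _ b' return paths (h a) (h b') with idpath => idpath end.

Definition Hot {X : Type} {Y : X -> Type} (f g : forall x, Y x) : Type :=
  forall x, paths (f x) (g x).

Definition ext {X : Type} {Y : X -> Type} {f g : forall x, Y x} (p : paths f g) : Hot f g :=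
  match p in paths _ g' return Hot f g' with idpath => fun x => idpath end.

Definition IsEquiv {X Y : Type} (h : X -> Y) : Type :=
  ({ l : Y -> X & forall x, paths (l (h x)) x } *
   { r : Y -> X & forall y, paths (h (r y)) y })%type.

Definition Funext : Type :=
  forall (X : Type) (Y : X -> Type) (f g : forall x, Y x), IsEquiv (@ext X Y f g).

Definition integ (fe : Funext) {X : Type} {Y : X -> Type} {f g : forall x, Y x}
  (alpha : Hot f g) : paths f g :=
  projT1 (fst (fe X Y f g)) alpha.

Definition integ_refl (fe : Funext) {X : Type} {Y : X -> Type} (f : forall x, Y x) :
  paths (integ fe (fun x => @idpath _ (f x))) idpath :=
  projT2 (fst (fe X Y f f)) idpath.

Definition concat_1p {X : Type} {a b : X} (p : paths a b) : paths (concat idpath p) p :=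
  match p in paths _ b' return paths (concat idpath p) p with idpath => idpath end.

Definition concat_ap_trivial {X Y : Type} (h : X -> Y) {y0 : Y} {a : X}
  (p : paths y0 (h a)) (q : paths a a) (H : paths q idpath) :
  paths (concat p (ap h q)) p.
Proof.
  destruct (inv H). exact idpath.
Defined.

(** [f sup_C] and [e_f] as elements of (Π x:A)(Π u:B x -> C) E(sup_C(x,u)). *)
Definition fsup {A : Type} {B : A -> Type} {C : Type}
  (supC : {x : A & B x -> C} -> C) {E : C -> Type} (f : forall z, E z) :
  forall (x : A) (u : B x -> C), E (supC (existT _ x u)) :=
  fun x u => f (supC (existT _ x u)).

Definition e_of {A : Type} {B : A -> Type} {C : Type}
  (supC : {x : A & B x -> C} -> C) {E : C -> Type}
  (e : forall (x : A) (u : B x -> C), (forall y, E (u y)) -> E (supC (existT _ x u)))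
  (f : forall z, E z) :
  forall (x : A) (u : B x -> C), E (supC (existT _ x u)) :=
  fun x u => e x u (fun y => f (u y)).

Definition AlgSec {A : Type} {B : A -> Type} {C : Type}
  (supC : {x : A & B x -> C} -> C) (E : C -> Type)
  (e : forall (x : A) (u : B x -> C), (forall y, E (u y)) -> E (supC (existT _ x u))) : Type :=
  { f : forall z, E z & paths (fsup supC f) (e_of supC e f) }.

Definition ext2 {A : Type} {B : A -> Type} {D : forall x : A, B x -> Type}
  {h k : forall (x : A) (u : B x), D x u}
  (p : paths h k) (x : A) (u : B x) : paths (h x u) (k x u) :=
  ext (ext p x) u.

Definition AlgSecHot (fe : Funext) {A : Type} {B : A -> Type} {C : Type}
  (supC : {x : A & B x -> C} -> C) (E : C -> Type)
  (e : forall (x : A) (u : B x -> C), (forall y, E (u y)) -> E (supC (existT _ x u)))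
  (F G : AlgSec supC E e) : Type :=
  { alpha : Hot (projT1 F) (projT1 G) &
    forall (x : A) (u : B x -> C),
      paths (concat (ext2 (projT2 F) x u)
                    (ap (e x u) (integ fe (fun y => alpha (u y)))))
            (concat (alpha (supC (existT _ x u))) (ext2 (projT2 G) x u)) }.

Definition AlgSecHot_refl (fe : Funext) {A : Type} {B : A -> Type} {C : Type}
  (supC : {x : A & B x -> C} -> C) (E : C -> Type)
  (e : forall (x : A) (u : B x -> C), (forall y, E (u y)) -> E (supC (existT _ x u)))
  (F : AlgSec supC E e) : AlgSecHot fe supC E e F F.
Proof.
  exists (fun z => idpath).
  intros x u.
  exact (concat
           (concat_ap_trivial (e x u) (ext2 (projT2 F) x u) _
              (integ_refl fe (fun y => projT1 F (u y))))
           (inv (concat_1p (ext2 (projT2 F) x u)))).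
Defined.

Definition idtoalgsechot (fe : Funext) {A : Type} {B : A -> Type} {C : Type}
  (supC : {x : A & B x -> C} -> C) (E : C -> Type)
  (e : forall (x : A) (u : B x -> C), (forall y, E (u y)) -> E (supC (existT _ x u)))
  (F G : AlgSec supC E e) (p : paths F G) : AlgSecHot fe supC E e F G :=
  match p in paths _ G' return AlgSecHot fe supC E e F G' with
  | idpath => AlgSecHot_refl fe supC E e F
  end.


(* By the fundamental theorem of identity types it suffices that the total space
   Σ G, AlgSecHot F G is contractible.  Reassociating, it is the total space over
   Σ (g, α : Hot f g), which is contractible with centre (f, refl), of the types of
   pairs (ḡ, coherence).  Over the centre the coherence says that ext ḡ and ext f̄
   agree componentwise, and pairs (ḡ, ext ḡ ~ ext f̄) form a contractible type by
   function extensionality once more. *)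

Definition Contr (X : Type) : Type := {c : X & forall x, paths c x}.

Definition transport {X : Type} (P : X -> Type) {a b : X} (p : paths a b) (u : P a) : P b :=
  match p in paths _ b' return P b' with idpath => u end.

Definition Retract (T S : Type) : Type :=
  {r : S -> T & {s : T -> S & forall t, paths (r (s t)) t}}.

Lemma idpath_eq_concat_Vp {X : Type} {a b : X} (p : paths a b) : paths idpath (concat (inv p) p).
Proof. destruct p. exact idpath. Defined.

Definition path_contr {X : Type} (H : Contr X) (a b : X) : paths a b :=
  concat (inv (projT2 H a)) (projT2 H b).

Lemma contr_retract {T S : Type} : Retract T S -> Contr S -> Contr T.
Proof.
  intros [r [s rs]] [c hc]. exists (r c). intro t.
  exact (concat (ap r (hc (s t))) (rs t)).
Defined.

Lemma contr_basedpaths {X : Type} (a : X) : Contr {b : X & paths a b}.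
Proof. exists (existT _ a idpath). intros [b p]. destruct p. exact idpath. Defined.

Lemma retract_sigma {X : Type} {P Q : X -> Type} :
  (forall x, Retract (P x) (Q x)) -> Retract {x & P x} {x & Q x}.
Proof.
  intro R.
  exists (fun w => existT _ (projT1 w) (projT1 (R _) (projT2 w))).
  exists (fun w => existT _ (projT1 w) (projT1 (projT2 (R _)) (projT2 w))).
  intros [x p]. exact (ap (existT _ x) (projT2 (projT2 (R x)) p)).
Defined.

Lemma contr_sigma_contr_base {X : Type} {P : X -> Type} (x0 : X) :
  Contr X -> Contr (P x0) -> Contr {x & P x}.
Proof.
  intros HX. apply contr_retract.
  exists (fun p => existT P x0 p).
  exists (fun w => transport P (path_contr HX (projT1 w) x0) (projT2 w)).
  intros [x p]. simpl. generalize (path_contr HX x x0). intro q. destruct q. exact idpath.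
Defined.

Lemma retract_paths_conj {X : Type} {a a' b b' : X} (ea : paths a' a) (eb : paths b' b) :
  Retract (paths a' b') (paths a b).
Proof.
  exists (fun t => concat (concat ea t) (inv eb)).
  exists (fun t => concat (concat (inv ea) t) eb).
  intro t. destruct ea, eb, t. exact idpath.
Defined.

Section FundamentalTheorem.

Variables (K : Type) (h : K) (Y : K -> Type) (phi : forall k, paths h k -> Y k).
Hypothesis total_contr : Contr {k & Y k}.

Definition fundamental_inv (k : K) (y : Y k) : paths h k :=
  ap (@projT1 _ _) (path_contr total_contr (existT Y h (phi h idpath)) (existT Y k y)).

Lemma fiberwise_ap_projT1 (w : {k & Y k}) (q : paths (existT Y h (phi h idpath)) w) :
  paths (phi (projT1 w) (ap (@projT1 _ _) q)) (projT2 w).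
Proof. destruct q. exact idpath. Defined.

Lemma fundamental_sect (k : K) (y : Y k) : paths (phi k (fundamental_inv k y)) y.
Proof. exact (fiberwise_ap_projT1 (existT Y k y) _). Defined.

Lemma fundamental_retr (k : K) (p : paths h k) : paths (fundamental_inv k (phi k p)) p.
Proof.
  destruct p. unfold fundamental_inv, path_contr.
  exact (ap (ap (@projT1 _ _))
           (inv (idpath_eq_concat_Vp (projT2 total_contr (existT Y h (phi h idpath)))))).
Defined.

(* The triangle identity of a half-adjoint equivalence. *)
Lemma fundamental_adj (k : K) (p : paths h k) :
  paths (ap (phi k) (fundamental_retr k p)) (fundamental_sect k (phi k p)).
Proof.
  destruct p. unfold fundamental_retr, fundamental_sect, fundamental_inv, path_contr. simpl.
  generalize (idpath_eq_concat_Vp (projT2 total_contr (existT Y h (phi h idpath)))).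
  generalize (concat (inv (projT2 total_contr (existT Y h (phi h idpath))))
                     (projT2 total_contr (existT Y h (phi h idpath)))).
  intros q M. destruct M. exact idpath.
Defined.

Lemma isequiv_fiberwise_contr_total (k : K) : IsEquiv (phi k).
Proof.
  split; exists (fundamental_inv k).
  - exact (fundamental_retr k).
  - exact (fundamental_sect k).
Defined.

Lemma contr_sigma_fiberwise (k : K) (Q : Y k -> Type) :
  Contr {y & Q y} -> Contr {p : paths h k & Q (phi k p)}.
Proof.
  apply contr_retract.
  exists (fun w => existT (fun p => Q (phi k p)) (fundamental_inv k (projT1 w))
           (transport Q (inv (fundamental_sect k (projT1 w))) (projT2 w))).
  exists (fun (w : {p : paths h k & Q (phi k p)}) => existT Q (phi k (projT1 w)) (projT2 w)).
  intros [p c]. simpl.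
  destruct (fundamental_adj k p).
  generalize (fundamental_retr k p). generalize (fundamental_inv k (phi k p)).
  intros a r. destruct r. exact idpath.
Defined.

End FundamentalTheorem.

Section Funext.

Variable fe : Funext.

(* The section of [ext]; [integ] is built from its retraction instead. *)
Definition ext_inv {X : Type} {Y : X -> Type} {f g : forall x, Y x}
  (alpha : Hot f g) : paths f g := projT1 (snd (fe X Y f g)) alpha.

Definition ext_ext_inv {X : Type} {Y : X -> Type} {f g : forall x, Y x}
  (alpha : Hot f g) : paths (ext (ext_inv alpha)) alpha := projT2 (snd (fe X Y f g)) alpha.

Definition ext2_inv {A : Type} {B : A -> Type} {D : forall x, B x -> Type}
  {h k : forall x u, D x u} (beta : forall x u, paths (h x u) (k x u)) : paths h k :=
  ext_inv (fun x => ext_inv (beta x)).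

Lemma ext2_ext2_inv {A : Type} {B : A -> Type} {D : forall x, B x -> Type}
  {h k : forall x u, D x u} (beta : forall x u, paths (h x u) (k x u)) (x : A) (u : B x) :
  paths (ext2 (ext2_inv beta) x u) (beta x u).
Proof.
  unfold ext2, ext2_inv.
  refine (concat (ap (fun z => ext (z x) u) (ext_ext_inv (fun x => ext_inv (beta x)))) _).
  exact (ap (fun z => z u) (ext_ext_inv (beta x))).
Defined.

Lemma retract_forall2 {A : Type} {B : A -> Type} {P Q : forall x, B x -> Type} :
  (forall x u, Retract (P x u) (Q x u)) -> Retract (forall x u, P x u) (forall x u, Q x u).
Proof.
  intro R.
  exists (fun t x u => projT1 (R x u) (t x u)).
  exists (fun t x u => projT1 (projT2 (R x u)) (t x u)).
  intro t. apply ext2_inv. intros x u. exact (projT2 (projT2 (R x u)) (t x u)).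
Defined.

Lemma contr_hot_total {X : Type} {Y : X -> Type} (f : forall x, Y x) :
  Contr {g : forall x, Y x & Hot f g}.
Proof.
  apply (contr_retract (S := {g : forall x, Y x & paths f g})), contr_basedpaths.
  apply retract_sigma. intro g.
  exists ext. exists ext_inv. exact ext_ext_inv.
Defined.

Lemma contr_hot2_total {A : Type} {B : A -> Type} {D : forall x, B x -> Type}
  (h : forall x u, D x u) : Contr {k : forall x u, D x u & forall x u, paths (h x u) (k x u)}.
Proof.
  apply (contr_retract (S := {k : forall x u, D x u & paths h k})), contr_basedpaths.
  apply retract_sigma. intro k.
  exists ext2. exists ext2_inv. intro beta.
  exact (ext2_inv (ext2_ext2_inv beta)).
Defined.

Lemma contr_sigma_ext2_eq {A : Type} {B : A -> Type} {D : forall x, B x -> Type}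
  {h k : forall x u, D x u} (p : paths h k) :
  Contr {q : paths h k & forall x u, paths (ext2 p x u) (ext2 q x u)}.
Proof.
  apply (contr_sigma_fiberwise _ h (fun k => forall x u, paths (h x u) (k x u))
           (fun k q => ext2 q) (contr_hot2_total h) k
           (fun beta => forall x u, paths (ext2 p x u) (beta x u))).
  exact (contr_hot2_total (ext2 p)).
Defined.

End Funext.

Section AlgSecHot.

Variables (fe : Funext) (A : Type) (B : A -> Type) (C : Type)
  (supC : {x : A & B x -> C} -> C) (E : C -> Type)
  (e : forall (x : A) (u : B x -> C), (forall y, E (u y)) -> E (supC (existT _ x u))).

Definition AlgSecHotCoh {f g : forall z, E z}
  (fbar : paths (fsup supC f) (e_of supC e f)) (gbar : paths (fsup supC g) (e_of supC e g))
  (alpha : Hot f g) : Type :=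
  forall x u, paths (concat (ext2 fbar x u) (ap (e x u) (integ fe (fun y => alpha (u y)))))
                    (concat (alpha (supC (existT _ x u))) (ext2 gbar x u)).

Lemma retract_algsechot_total (F : AlgSec supC E e) :
  Retract {G : AlgSec supC E e & AlgSecHot fe supC E e F G}
    {w : {g : forall z, E z & Hot (projT1 F) g} &
      {gbar : paths (fsup supC (projT1 w)) (e_of supC e (projT1 w)) &
        AlgSecHotCoh (projT2 F) gbar (projT2 w)}}.
Proof.
  exists (fun '(existT _ (existT _ g alpha) (existT _ gbar c)) =>
            existT _ (existT _ g gbar) (existT _ alpha c)).
  exists (fun '(existT _ (existT _ g gbar) (existT _ alpha c)) =>
            existT _ (existT _ g alpha) (existT _ gbar c)).
  intros [[g gbar] [alpha c]]. exact idpath.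
Defined.

Lemma retract_algsechotcoh_refl {f : forall z, E z}
  (fbar : paths (fsup supC f) (e_of supC e f)) (gbar : paths (fsup supC f) (e_of supC e f)) :
  Retract (AlgSecHotCoh fbar gbar (fun z => idpath))
    (forall x u, paths (ext2 fbar x u) (ext2 gbar x u)).
Proof.
  apply (retract_forall2 fe). intros x u. apply retract_paths_conj.
  - exact (concat_ap_trivial (e x u) (ext2 fbar x u) _ (integ_refl fe (fun y => f (u y)))).
  - exact (concat_1p _).
Defined.

Lemma contr_algsechot_total (F : AlgSec supC E e) :
  Contr {G : AlgSec supC E e & AlgSecHot fe supC E e F G}.
Proof.
  destruct F as [f fbar].
  apply (contr_retract (retract_algsechot_total (existT _ f fbar))).
  apply (contr_sigma_contr_base (existT _ f (fun z => idpath)) (contr_hot_total fe f)).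
  apply (contr_retract (S := {gbar : paths (fsup supC f) (e_of supC e f) &
            forall x u, paths (ext2 fbar x u) (ext2 gbar x u)})).
  - apply retract_sigma. exact (retract_algsechotcoh_refl fbar).
  - exact (contr_sigma_ext2_eq fe fbar).
Defined.

End AlgSecHot.

Theorem mainTheorem8 (fe : Funext) (A : Type) (B : A -> Type) (C : Type)
  (supC : {x : A & B x -> C} -> C) (E : C -> Type)
  (e : forall (x : A) (u : B x -> C), (forall y, E (u y)) -> E (supC (existT _ x u)))
  (F G : AlgSec supC E e) :
  IsEquiv (idtoalgsechot fe supC E e F G).
Proof.
  exact (isequiv_fiberwise_contr_total _ F (AlgSecHot fe supC E e F)
           (idtoalgsechot fe supC E e F) (contr_algsechot_total fe A B C supC E e F) G).
Qed.
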